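(* Let $X$ be a distance regular graph of diameter $d$, let $A_i$ be the adjacency matrix of its $i$-th distance graph ($i=0,\dots,d$), let $Y=\mathrm{LD}(X)$, and let $Y_i$ be the $i$-th distance digraph of $Y$. Then $A(Y_0)=I$, $A(Y_2)=D_h^TA_1D_t - I$, and $A(Y_i)=D_h^TA_{i-1}D_t$ for $i\in\{1,3,4,\dots,d+1\}$.
   Context: $X$ is a connected $k$-regular distance regular graph (for vertices $u,v$ at distance $\ell$, the number of vertices at distance $i$ from $u$ and $j$ from $v$ depends only on $i,j,\ell$). $A_i$ is the $01$-matrix with $(A_i)_{uv}=1$ iff $\mathrm{dist}_X(u,v)=i$. Each edge $\{a,b\}$ of $X$ is replaced by arcs $(a,b)$ and $(b,a)$; the line digraph $\mathrm{LD}(X)$ has the arcs as vertices, with an arc from $(a,b)$ to $(c,d)$ iff $b=c$. For a digraph $Y$, its $i$-th distance digraph $Y_i$ has the same vertex set, with $a$ adjacent to $b$ iff the directed distance from $a$ to $b$ in $Y$ is $i$; $A(\cdot)$ denotes the $01$-adjacency matrix. $D_t$ and $D_h$ have rows indexed by vertices of $X$ and columns by arcs: $(D_t)_{u,(a,b)}=1$ iff $u=a$, $(D_h)_{u,(a,b)}=1$ iff $u=b$, and $0$ otherwise. *)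

From HB Require Import structures.
From mathcomp Require Import all_boot all_order all_algebra.
Set Implicit Arguments. Unset Strict Implicit. Unset Printing Implicit Defensive.
Import GRing.Theory.
Local Open Scope ring_scope.

Fixpoint walkb (T : finType) (e : rel T) (n : nat) (u v : T) : bool :=
  if n is n'.+1 then [exists w, e u w && walkb e n' w v] else u == v.

Definition is_dist (T : finType) (e : rel T) (i : nat) (u v : T) : bool :=
  walkb e i u v && [forall j : 'I_i, ~~ walkb e j u v].

Definition distrel (T : finType) (e : rel T) (i : nat) : rel T :=
  fun u v => is_dist e i u v.

Definition simple_graph (V : finType) (adj : rel V) : Prop :=
  symmetric adj /\ irreflexive adj.

Definition connected_graph (V : finType) (adj : rel V) : Prop :=
  forall u v : V, connect adj u v.

Definition regular_graph (V : finType) (adj : rel V) (k : nat) : Prop :=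
  forall u : V, #|[set w | adj u w]| = k.

Definition distance_regular (V : finType) (adj : rel V) : Prop :=
  forall (i j l : nat) (u v u' v' : V),
    is_dist adj l u v -> is_dist adj l u' v' ->
    #|[set w | is_dist adj i u w && is_dist adj j v w]| =
    #|[set w | is_dist adj i u' w && is_dist adj j v' w]|.

Definition has_diameter (V : finType) (adj : rel V) (d : nat) : Prop :=
  (forall u v : V, exists2 i, (i <= d)%N & is_dist adj i u v) /\
  (exists u v : V, is_dist adj d u v).

(* Arcs: each edge {a,b} gives the arcs (a,b) and (b,a). *)
Definition arc (V : finType) (adj : rel V) : finType :=
  {p : V * V | adj p.1 p.2}.

Definition arc_tail (V : finType) (adj : rel V) (x : arc adj) : V := (val x).1.
Definition arc_head (V : finType) (adj : rel V) (x : arc adj) : V := (val x).2.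

Definition line_digraph (V : finType) (adj : rel V) : rel (arc adj) :=
  fun x y => arc_head x == arc_tail y.

Definition mxof (T T' : finType) (f : T -> T' -> bool) : 'M[int]_(#|T|, #|T'|) :=
  \matrix_(i, j) (f (enum_val i) (enum_val j))%:R.

Definition adjmx (T : finType) (e : rel T) : 'M[int]_(#|T|, #|T|) := mxof e.

Definition Dt (V : finType) (adj : rel V) : 'M[int]_(#|V|, #|arc adj|) :=
  mxof (fun (u : V) (x : arc adj) => u == arc_tail x).
Definition Dh (V : finType) (adj : rel V) : 'M[int]_(#|V|, #|arc adj|) :=
  mxof (fun (u : V) (x : arc adj) => u == arc_head x).

Arguments line_digraph {V} adj.
Arguments Dt {V} adj.
Arguments Dh {V} adj.
Arguments arc_tail {V adj}.
Arguments arc_head {V adj}.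
Arguments distrel {T} e i.

From Pilot Require Import Defs.
From HB Require Import structures.
From mathcomp Require Import all_boot all_order all_algebra.
Import GRing.Theory.
Local Open Scope ring_scope.

(* A directed walk x = x_0 -> x_1 -> ... -> x_(n+1) = y in the
   line digraph LD(X) is determined by the vertices
   head x_0 = tail x_1, ..., head x_n = tail x_(n+1), which form a walk of
   length n in X from head x to tail y; conversely every such walk lifts to
   LD(X).  Hence dist_LD(x, x) = 0 and, for arcs x <> y,
   dist_LD(x, y) = 1 + dist_X(head x, tail y).
   On the matrix side, the (x, y) entry of D_h^T M D_t is M(head x, tail y),
   so D_h^T A_(i-1) D_t records "dist_X(head x, tail y) = i - 1".  It only
   remains to correct the diagonal: in a simple graph head x and tail x are
   adjacent, so the diagonal of D_h^T A_1 D_t is all ones and must be removed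
   for Y_2, whereas for i <> 2 the diagonal of D_h^T A_(i-1) D_t is zero. *)

Lemma walkbS (T : finType) (e : rel T) (n : nat) (u v : T) :
  walkb e n.+1 u v = [exists w, e u w && walkb e n w v].
Proof. by []. Qed.

Lemma is_dist0 (T : finType) (e : rel T) (u v : T) : is_dist e 0 u v = (u == v).
Proof. by rewrite /is_dist /=; case: (u == v) => //=; apply/forallP => -[]. Qed.

Lemma is_dist1 (T : finType) (e : rel T) (u v : T) :
  is_dist e 1 u v = e u v && (u != v).
Proof.
rewrite /is_dist /=; congr andb.
- by apply/existsP/idP => [[w /andP [euw /eqP <-]] // | euv]; exists v; rewrite euv eqxx.
- apply/forallP/idP => [/(_ ord0) // | uv [[|j] //= _]].
Qed.

Lemma is_dist_uniq {T : finType} {e : rel T} {m n : nat} {u v : T} :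
  is_dist e m u v -> is_dist e n u v -> m = n.
Proof.
wlog le_mn : m n / (m <= n)%N => [sym_wlog dm dn|].
  by case: (leqP m n) => [|/ltnW] le; [exact: sym_wlog | exact/esym/sym_wlog].
move: le_mn; rewrite leq_eqVlt => /orP [/eqP // | lt_mn].
by case/andP=> walk_m _ /andP [_ /forallP /(_ (Ordinal lt_mn))]; rewrite walk_m.
Qed.

Section LineDigraph.

Variables (V : finType) (adj : rel V).

Lemma walkb_line_digraph (n : nat) (x y : Defs.arc adj) :
  walkb (line_digraph adj) n.+1 x y = walkb adj n (arc_head x) (arc_tail y).
Proof.
elim: n x => [|n IHn] x; rewrite !walkbS.
  apply/existsP/idP => [[z /andP [xz /eqP <-]] // | hxty].
  by exists y; rewrite /= eqxx andbT.
apply/existsP/existsP => [[z /andP [xz zy]] | [v /andP [hxv vy]]].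
  exists (arc_head z); rewrite -IHn zy andbT (eqP xz); exact: (valP z).
exists (Sub (arc_head x, v) hxv : Defs.arc adj).
by rewrite IHn /line_digraph /arc_tail /arc_head SubK eqxx.
Qed.

Lemma is_dist_line_digraphS (i : nat) (x y : Defs.arc adj) :
  is_dist (line_digraph adj) i.+1 x y =
  (x != y) && is_dist adj i (arc_head x) (arc_tail y).
Proof.
rewrite /is_dist walkb_line_digraph.
apply/andP/andP => [[walk_i /forallP no_shorter] | [neq_xy /andP [walk_i /forallP no_shorter]]].
  split; first exact: (no_shorter ord0).
  rewrite walk_i; apply/forallP => j.
  by have := no_shorter (lift ord0 j); rewrite lift0 walkb_line_digraph.
split=> //; apply/forallP => -[[|j] lt_j] //.
rewrite [nat_of_ord _]/= walkb_line_digraph.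
exact: (no_shorter (Ordinal (lt_j : (j < i)%N))).
Qed.

Hypothesis adj_sym : symmetric adj.
Hypothesis adj_irr : irreflexive adj.

Lemma arc_is_dist1 (x : Defs.arc adj) : is_dist adj 1 (arc_head x) (arc_tail x).
Proof.
rewrite is_dist1 adj_sym (valP x) /=.
apply/eqP => head_eq_tail; have := valP x.
by rewrite /arc_head /arc_tail in head_eq_tail; rewrite head_eq_tail adj_irr.
Qed.

Lemma is_dist_line_digraph2 (x y : Defs.arc adj) :
  is_dist (line_digraph adj) 2 x y = is_dist adj 1 (arc_head x) (arc_tail y) && (x != y).
Proof. by rewrite is_dist_line_digraphS andbC. Qed.

(* For i <> 1 the condition x <> y is automatic: x = y would put head x
   and tail x at distance i as well as at distance 1. *)
Lemma is_dist_line_digraph_ne2 (i : nat) (x y : Defs.arc adj) : i != 1%N ->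
  is_dist (line_digraph adj) i.+1 x y = is_dist adj i (arc_head x) (arc_tail y).
Proof.
move=> i_ne1; rewrite is_dist_line_digraphS.
case: eqP => [<- | _] //=; apply/esym/negP => dist_i.
by move: i_ne1; rewrite (is_dist_uniq dist_i (arc_is_dist1 x)).
Qed.

End LineDigraph.

Lemma eq_mxof (T T' : finType) (f g : T -> T' -> bool) :
  f =2 g -> mxof f = mxof g.
Proof. by move=> fg; apply/matrixP => r s; rewrite !mxE fg. Qed.

Lemma mxof_eq (T : finType) : mxof (fun u v : T => u == v) = 1%:M.
Proof. by apply/matrixP => r s; rewrite !mxE (inj_eq enum_val_inj). Qed.

Lemma mxof_offdiag (T : finType) (f : rel T) : reflexive f ->
  mxof (fun u v => f u v && (u != v)) = mxof f - 1%:M.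
Proof.
move=> f_refl; apply/matrixP => r s; rewrite !mxE (inj_eq enum_val_inj).
case: eqP => [-> | _]; last by rewrite andbT subr0.
by rewrite f_refl subrr.
Qed.

Lemma sum_select (T : finType) (t : T) (F : 'I_#|T| -> int) :
  \sum_r ((enum_val r == t)%:R * F r) = F (enum_rank t).
Proof.
rewrite (bigD1 (enum_rank t)) //= enum_rankK eqxx mul1r big1 ?addr0 // => r ne_rt.
suff -> : (enum_val r == t) = false by rewrite mul0r.
by apply: contraNF ne_rt => /eqP <-; rewrite enum_valK.
Qed.

Lemma Dh_mxof_Dt (V : finType) (adj : rel V) (f : V -> V -> bool) :
  (Dh adj)^T *m mxof f *m Dt adj =
  mxof (fun x y : Defs.arc adj => f (arc_head x) (arc_tail y)).
Proof.
apply/matrixP => r s; rewrite !mxE.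
under eq_bigr => v _ do rewrite [X in _ * X]mxE mulrC.
rewrite sum_select mxE.
under eq_bigr => u _ do rewrite !mxE.
by rewrite sum_select !enum_rankK.
Qed.

Theorem lemma4p2 (V : finType) (adj : rel V) (k d : nat) :
  simple_graph adj -> connected_graph adj -> regular_graph adj k ->
  distance_regular adj -> has_diameter adj d ->
  [/\ adjmx (distrel (line_digraph adj) 0) = 1%:M,
      adjmx (distrel (line_digraph adj) 2) =
        (Dh adj)^T *m adjmx (@distrel V adj 1) *m Dt adj - 1%:M
    & forall i : nat, (1 <= i <= d.+1)%N -> i != 2%N ->
      adjmx (distrel (line_digraph adj) i) =
        (Dh adj)^T *m adjmx (@distrel V adj i.-1) *m Dt adj].
Proof.
move=> [adj_sym adj_irr] _ _ _ _; rewrite /adjmx; split.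
- by rewrite -mxof_eq; apply: eq_mxof => x y; exact: is_dist0.
- rewrite Dh_mxof_Dt -mxof_offdiag => [|x]; last exact: arc_is_dist1.
  by apply: eq_mxof => x y; exact: is_dist_line_digraph2.
- move=> [|i] // _ i_ne1; rewrite Dh_mxof_Dt; apply: eq_mxof => x y.
  exact: is_dist_line_digraph_ne2.
Qed.
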